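(* Consider the networked Cournot game defined in the context, with market maker payoff $\pi^M\in\{W_{soc},W_{res},W_{con}\}$, and assume it is feasible. (i) If $\pi^M=W_{soc}$, then a Generalized Nash Equilibrium (GNE) exists. (ii) If $\pi^M=W_{res}$, then a GNE exists. (iii) If $\pi^M=W_{con}$, a GNE need not exist: there exist a network and parameters for which the game has no GNE. An example is the 2-node network with $a_1=a_2=10$, $b_1=1.2$, $b_2=1$, $c_1=c_2=1$ and line capacity $f_{12}=2$.
   Context: Network model. There are $n$ nodes and $\ell$ transmission lines. Let $H\in\mathbb{R}^{\ell\times n}$ be the shift-factor matrix of a connected power network under the linearized DC power-flow model; the flows on the lines are $-Hr$ when the vector of power injections is $-r$. Let $f\in\mathbb{R}^\ell_{+}$ be the vector of line capacities. Generators. At each node $k$ there is a generator $G_k$. It chooses a quantity $q_k\in S^G_k=\mathbb{R}_+$ and incurs cost $c_kq_k^2$, where $c_k>0$. Demand and prices. Demand at node $k$ has inverse demand $p_k(d)=a_k-b_kd$, where $a_k>0$ and $b_k\ge 0$. Market maker. A market maker $M$ chooses re-balancing quantities $r\in\mathbb{R}^n$ from $$S^M(q)=\{r\in\mathbb{R}^n: q+r\ge 0,\ |Hr|\le f,\ \mathbf{1}^\top r=0\},$$ where inequalities are elementwise. Node $k$ then receives $d_k=q_k+r_k$, and both demand and generator at node $k$ face the price $p_k(q_k+r_k)$. Payoffs. Generator $k$'s profit is $\pi^G_k(q,r)=q_kp_k(q_k+r_k)-c_kq_k^2$. The market maker's payoff $\pi^M$ is one of: - $W_{soc}(q,r)=\sum_k\big(\int_0^{q_k+r_k}p_k(w)\,dw-c_kq_k^2\big)$;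 - $W_{res}(q,r)=\sum_k\big(\int_0^{q_k+r_k}p_k(w)\,dw-q_kp_k(q_k+r_k)\big)$; - $W_{con}(q,r)=\sum_k\big(\int_0^{q_k+r_k}p_k(w)\,dw-(q_k+r_k)p_k(q_k+r_k)\big)$. Feasibility. The game is feasible if there exists $q\in\mathbb{R}^n_+$ with $S^M(q)\neq\emptyset$. GNE. A pair $(q^*,r^* )$ is a GNE if $r^*\in S^M(q^* )$ and both of the following hold: - for every $k$ and every $q_k\ge 0$, $\pi^G_k(q_k^*,q_{-k}^*,r^* )\ge\pi^G_k(q_k,q^*_{-k},r^* )$; - for every $r\in S^M(q^* )$, $\pi^M(q^*,r^* )\ge \pi^M(q^*,r)$. 2-node network. Nodes 1 and 2 are joined by a single line of capacity $f_{12}$. Writing $r_1=r$ and $r_2=-r$, the market maker's feasible set becomes $\{r: -q_1\le r\le q_2,\ -f_{12}\le r\le f_{12}\}$. *)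

From HB Require Import structures.
From mathcomp Require Import all_boot all_order all_algebra.
Set Implicit Arguments. Unset Strict Implicit. Unset Printing Implicit Defensive.
Import Order.TTheory GRing.Theory Num.Theory.
Local Open Scope ring_scope.

Section Cournot.
Variable R : rcfType.

Definition incidence (n l : nat) (fr to : 'I_l -> 'I_n) : 'M[R]_(l, n) :=
  \matrix_(e < l, k < n) (((k == fr e)%:R - (k == to e)%:R) : R).

Definition branch_mx (n l : nat) (fr to : 'I_l -> 'I_n) (beta : 'I_l -> R)
  : 'M[R]_(l, n) := \matrix_(e < l, k < n) (beta e * incidence fr to e k).

Definition laplacian (n l : nat) (fr to : 'I_l -> 'I_n) (beta : 'I_l -> R)
  : 'M[R]_n := (incidence fr to)^T *m branch_mx fr to beta.

Definition adj (n l : nat) (fr to : 'I_l -> 'I_n) : rel 'I_n :=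
  fun i j => [exists e : 'I_l, ((fr e == i) && (to e == j)) ||
                               ((fr e == j) && (to e == i))].

Definition connected_net (n l : nat) (fr to : 'I_l -> 'I_n) : Prop :=
  forall i j : 'I_n, connect (adj fr to) i j.

Definition unit_inj (n : nat) (k s : 'I_n) : 'cV[R]_n :=
  \col_(i < n) (((i == k)%:R - (i == s)%:R) : R).

(* H is the shift-factor (PTDF) matrix of a connected power network under the
   linearized DC power-flow model: there is a network (lines fr e -> to e,
   no self loops, positive susceptances beta, connected) and a reference
   (slack) node s such that column k of H is the vector of line flows
   produced by injecting one unit at node k and withdrawing it at s
   (voltage angles theta with theta_s = 0 and B theta = injection,
   flows = diag(beta) A theta). *)
Definition is_shift_factor (n l : nat) (H : 'M[R]_(l, n)) : Prop :=
  exists (fr to : 'I_l -> 'I_n) (beta : 'I_l -> R) (s : 'I_n),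
    [/\ (forall e, fr e != to e),
        (forall e, 0 < beta e),
        connected_net fr to &
        forall k : 'I_n, exists theta : 'cV[R]_n,
          [/\ theta s 0 = 0,
              laplacian fr to beta *m theta = unit_inj k s &
              col k H = branch_mx fr to beta *m theta]].

Variables (n l : nat).
Implicit Types (q r : 'cV[R]_n) (a b c : 'I_n -> R).

Definition price a b (k : 'I_n) (d : R) : R := a k - b k * d.

(* \int_0^d p_k(w) dw, written out in closed form for the affine p_k *)
Definition int_price a b (k : 'I_n) (d : R) : R := a k * d - b k * d ^+ 2 / 2%:R.

Definition SM (H : 'M[R]_(l, n)) (f : 'cV[R]_l) q r : Prop :=
  [/\ (forall k : 'I_n, 0 <= q k 0 + r k 0),
      (forall e : 'I_l, `|(H *m r) e 0| <= f e 0) &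
      \sum_(k < n) r k 0 = 0].

Definition profitG a b c (k : 'I_n) q r : R :=
  q k 0 * price a b k (q k 0 + r k 0) - c k * q k 0 ^+ 2.

Definition W_soc a b c q r : R :=
  \sum_(k < n) (int_price a b k (q k 0 + r k 0) - c k * q k 0 ^+ 2).
Definition W_res a b c q r : R :=
  \sum_(k < n) (int_price a b k (q k 0 + r k 0)
                - q k 0 * price a b k (q k 0 + r k 0)).
Definition W_con a b c q r : R :=
  \sum_(k < n) (int_price a b k (q k 0 + r k 0)
                - (q k 0 + r k 0) * price a b k (q k 0 + r k 0)).

Definition upd q (k : 'I_n) (x : R) : 'cV[R]_n :=
  \col_(i < n) (if i == k then x else q i 0).

Definition feasible (H : 'M[R]_(l, n)) (f : 'cV[R]_l) : Prop :=
  exists q, (forall k, 0 <= q k 0) /\ exists r, SM H f q r.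

Definition GNE (H : 'M[R]_(l, n)) (f : 'cV[R]_l) a b c
    (piM : 'cV[R]_n -> 'cV[R]_n -> R) q r : Prop :=
  [/\ (forall k, 0 <= q k 0),
      SM H f q r,
      (forall (k : 'I_n) (x : R), 0 <= x ->
          profitG a b c k (upd q k x) r <= profitG a b c k q r) &
      (forall r', SM H f q r' -> piM q r' <= piM q r)].

End Cournot.

(* Given a rebalancing [r], each generator's best response [q_k(r_k)] is
   explicit, and [r] remains feasible against it iff every [r_k] lies above a
   floor.  A GNE is therefore an admissible rebalancing that is optimal
   for the market maker against the best responses it induces.  For [W_res]
   the dependence on [r] is a concave separable quadratic; for [W_soc] the
   game has a concave piecewise-quadratic potential whose gradient at [r] is
   the vector of prices [p_k(q_k(r_k) + r_k)].  In both cases a maximizer over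
   the polyhedron of admissible rebalancings yields a GNE.  For [W_con] the
   market maker's payoff is convex in [r]: on the two-node example it drives
   [r] to [r_1 = 2], and then the withdrawal of all of node 1's output beats
   it, so no choice of [r] is stable. *)

From HB Require Import structures.
From mathcomp Require Import all_boot all_order all_algebra.
From mathcomp Require Import ring lra zify.
From Stdlib Require Import Classical.
Import Order.TTheory GRing.Theory Num.Theory.
Local Open Scope ring_scope.
Set Implicit Arguments. Unset Strict Implicit. Unset Printing Implicit Defensive.

Section MaxAttained.
Variables (T : Type) (K : realFieldType) (V : T -> K).

Definition max_attained (P : T -> Prop) :=
  (exists x, P x) -> exists2 xs, P xs & forall y, P y -> V y <= V xs.

Lemma max_attained_eq (P Q : T -> Prop) :
  (forall x, P x <-> Q x) -> max_attained P -> max_attained Q.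
Proof.
move=> PQ maxP [x /PQ Px]; have [xs /PQ Qxs xsP] := maxP (ex_intro _ x Px).
by exists xs => // y /PQ /xsP.
Qed.

Lemma max_attained_or (P Q : T -> Prop) :
  max_attained P -> max_attained Q -> max_attained (fun x => P x \/ Q x).
Proof.
move=> maxP maxQ [x0 PQx0].
have [[xp Pxp xpP]|noP] := classic (exists2 xp, P xp & forall y, P y -> V y <= V xp).
  have [[xq Qxq xqQ]|noQ] := classic (exists2 xq, Q xq & forall y, Q y -> V y <= V xq).
    have [lepq|/ltW leqp] := lerP (V xp) (V xq).
      by exists xq; [right|move=> y [/xpP /le_trans->|/xqQ]].
    by exists xp; [left|move=> y [/xpP|/xqQ /le_trans->]].
  exists xp; [by left|move=> y [/xpP //|Qy]].
  by case: noQ; apply: maxQ; exists y.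
have noPx x : ~ P x by move=> Px; case: noP; apply: maxP; exists x.
case: PQx0 => [/noPx //|Qx0]; have [xq Qxq xqQ] := maxQ (ex_intro _ x0 Qx0).
by exists xq; [right|move=> y [/noPx|/xqQ]].
Qed.

Lemma max_attained_seq (J : eqType) (Sub : J -> T -> Prop) (s : seq J) :
  (forall j, max_attained (Sub j)) ->
  max_attained (fun x => exists2 j, j \in s & Sub j x).
Proof.
move=> maxSub; elim: s => [|j s IHs]; first by move=> [x [j]].
apply: (@max_attained_eq (fun x => Sub j x \/ exists2 j, j \in s & Sub j x)).
  move=> x; split=> [[Sjx|[j' sj' Sx]]|[j']].
  - by exists j; rewrite ?mem_head.
  - by exists j'; rewrite // in_cons sj' orbT.
  - by rewrite in_cons => /orP[/eqP-> | sj' Sx]; [left | right; exists j'].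
exact: max_attained_or.
Qed.

Lemma max_attained_dominated (J : finType) (Sub : J -> T -> Prop) (P : T -> Prop) :
  (forall j x, Sub j x -> P x) -> (forall j, max_attained (Sub j)) ->
  (forall y, P y -> exists j z, Sub j z /\ V y <= V z) ->
  max_attained P.
Proof.
move=> SubP maxSub dom [y0 /dom [j0 [z0 [Sz0 _]]]].
have [|xs [j _ Sxs] xsS] := @max_attained_seq _ Sub (enum J) maxSub.
  by exists z0, j0; rewrite ?mem_enum.
exists xs => [|y /dom [j' [z [Sz /le_trans]]]]; first exact: SubP Sxs.
by apply; apply: xsS; exists j'; rewrite ?mem_enum.
Qed.

End MaxAttained.

Lemma max_attained_congr (T : Type) (K : realFieldType) (V W : T -> K) (P : T -> Prop) :
  (forall x, P x -> V x = W x) -> max_attained W P -> max_attained V P.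
Proof.
move=> VW maxW /maxW [xs Pxs xsP]; exists xs => // y Py.
by rewrite !VW //; apply: xsP.
Qed.

Definition bounded (K : realFieldType) (N : nat) (P : 'rV[K]_N -> Prop) :=
  exists M, forall x, P x -> forall j, `|x 0 j| <= M.

Lemma bounded_ray_exits (K : realFieldType) (N : nat) (P : 'rV[K]_N -> Prop) y e :
  bounded P -> e != 0 -> exists2 T, 0 <= T & ~ P (y + T *: e).
Proof.
move=> [M PM] /eqP e_neq0.
have [j ej_neq0] : exists j, e 0 j != 0.
  apply: not_all_not_ex => e0; apply: e_neq0; apply/rowP => j.
  by rewrite mxE; case: (eqVneq (e 0 j) 0) => // /e0.
have ej_gt0 : 0 < `|e 0 j| by rewrite normr_gt0.
pose T := (`|M| + `|y 0 j| + 1) / `|e 0 j|.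
have T_ge0 : 0 <= T.
  by rewrite divr_ge0 ?normr_ge0 //; have := normr_ge0 M; have := normr_ge0 (y 0 j); lra.
exists T => // /PM /(_ j); rewrite !mxE => yTe_le.
have normTe : `|T * e 0 j| = `|M| + `|y 0 j| + 1.
  by rewrite normrM (ger0_norm T_ge0) divfK // gt_eqF.
have := ler_normD (y 0 j + T * e 0 j) (- y 0 j).
rewrite normrN (addrC (y 0 j + _)) addKr normTe; have := ler_norm M; lra.
Qed.

Lemma mulmx_row11 (K : realFieldType) (N : nat) (y e : 'rV[K]_N) (w : 'cV[K]_N) t :
  ((y + t *: e) *m w) 0 0 = (y *m w) 0 0 + t * (e *m w) 0 0.
Proof. by rewrite mulmxDl -scalemxAl !mxE. Qed.

Lemma mulmx11_eq (K : realFieldType) (N : nat) (x y : 'rV[K]_N) (w : 'cV[K]_N) :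
  ((x - y) *m w = 0) <-> ((x *m w) 0 0 = (y *m w) 0 0).
Proof.
rewrite mulmxBl; split=> [/matrixP/(_ 0 0)|xy]; last first.
  by rewrite [x *m w]mx11_scalar [y *m w]mx11_scalar xy subrr.
by rewrite !mxE => /eqP; rewrite subr_eq0 => /eqP.
Qed.

Section Polyhedron.
Variables (K : realFieldType) (N : nat) (I : finType).
Variables (u : I -> 'cV[K]_N) (h : I -> K).

Definition polyhedron (x0 : 'rV[K]_N) (B : 'M[K]_N) (S : {set I}) (x : 'rV[K]_N) :=
  (x - x0 <= B)%MS /\ forall i, i \in S -> (x *m u i) 0 0 <= h i.

Definition face x0 B (S : {set I}) (i : I) (x : 'rV[K]_N) :=
  [/\ i \in S, polyhedron x0 B S x & (x *m u i) 0 0 = h i].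

Lemma polyhedron_move (x0 y e : 'rV[K]_N) (B : 'M[K]_N) t :
  (y - x0 <= B)%MS -> (e <= B)%MS -> (y + t *: e - x0 <= B)%MS.
Proof. by move=> yB eB; rewrite addrAC addmx_sub // scalemx_sub. Qed.

(* Leaving the polyhedron along a ray, one first crosses the constraint with
   the smallest crossing parameter. *)
Lemma polyhedron_exit x0 B S y e T :
  polyhedron x0 B S y -> (e <= B)%MS -> 0 <= T -> ~ polyhedron x0 B S (y + T *: e) ->
  exists i t, 0 <= t <= T /\ face x0 B S i (y + t *: e).
Proof.
move=> [yB yS] eB T_ge0 out.
pose Y i := (y *m u i) 0 0; pose D i := (e *m u i) 0 0.
pose viol i := (i \in S) && (h i < Y i + T * D i).
have [i0 viol_i0] : exists i, viol i.
  apply: not_all_not_ex => noviol; apply: out; split; first exact: polyhedron_move.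
  move=> i iS; rewrite mulmx_row11 leNgt; apply/negP => hlt.
  by apply: (noviol i); rewrite /viol iS.
have violP i : viol i -> [/\ i \in S, Y i <= h i, 0 < D i & 0 < T].
  case/andP=> iS hlt; have Yi := yS i iS; rewrite -/(Y i) in Yi.
  have TD : 0 < T * D i by lra.
  split=> //; first by case: (lerP (D i) 0) => // D_le0; nra.
  by case: (lerP T 0) => // T_le0; move: TD; rewrite (@le_anti _ _ T 0) ?T_le0 // mul0r ltxx.
pose cross i := (h i - Y i) / D i.
have [i1 viol_i1 i1min] := arg_minP cross viol_i0.
have [i1S Yi1 Di1 T_gt0] := violP i1 viol_i1.
have cross_lt i : viol i -> 0 <= cross i < T.
  move=> vi; have [_ Yi Di _] := violP i vi; move: vi => /andP [_ hlt].
  rewrite /cross ler_pdivlMr // ltr_pdivrMr // mul0r; lra.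
have /andP [c0 cT] := cross_lt i1 viol_i1.
exists i1, (cross i1); split; first by rewrite c0 ltW.
split=> //; last by rewrite mulmx_row11 -/(Y i1) -/(D i1) /cross divfK ?gt_eqF //; ring.
split; first exact: polyhedron_move.
move=> j jS; rewrite mulmx_row11 -/(Y j) -/(D j).
have [vj|novj] := boolP (viol j).
  have [_ Yj Dj _] := violP j vj; have := i1min j vj.
  rewrite /cross ler_pdivlMr //; lra.
have Yj : Y j <= h j by apply: yS.
move: novj; rewrite /viol jS /= -leNgt => hT.
have interpolate : (Y j + cross i1 * D j - h j) * T
       = (T - cross i1) * (Y j - h j) + cross i1 * (Y j + T * D j - h j) by ring.
have : (Y j + cross i1 * D j - h j) * T <= 0 by rewrite interpolate; nra.
by rewrite pmulr_lle0 // subr_le0.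
Qed.

Lemma polyhedron_cut x0 B S (S' : {set I}) (w : 'cV[K]_N) v x1 :
  polyhedron x0 B S x1 -> (x1 *m w) 0 0 = v -> {subset S' <= S} ->
  (forall i, i \in S -> i \notin S' ->
     forall x : 'rV[K]_N, (x *m w) 0 0 = v -> (x *m u i) 0 0 <= h i) ->
  forall x : 'rV[K]_N, polyhedron x0 B S x /\ (x *m w) 0 0 = v <->
            polyhedron x1 (B :&: kermx w)%MS S' x.
Proof.
move=> [x1B x1S] x1w S'S redundant x; split.
  move=> [[xB xS] xw]; split=> [|i /S'S /xS //].
  rewrite sub_capmx; apply/andP; split.
    by rewrite -(subrKA x0) addmx_sub // -opprB eqmx_opp.
  by apply/sub_kermxP/mulmx11_eq; rewrite xw x1w.
move=> []; rewrite sub_capmx => /andP [xB /sub_kermxP /mulmx11_eq xw] xS'.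
rewrite x1w in xw; split=> //; split; first by rewrite -(subrKA x1) addmx_sub.
move=> i iS; have [/xS' //|iS'] := boolP (i \in S').
exact: redundant.
Qed.

End Polyhedron.

(* Maximum of a concave quadratic [V] on a bounded polyhedron, with no
   compactness at hand: by induction on the number of constraints plus the
   dimension, every point is dominated either by a point of a face or by a
   point of the hyperplane where [V] is critical along a direction of
   positive curvature; both are polyhedra of smaller size. *)
Section ConcaveQuadratic.
Variables (K : realFieldType) (N : nat) (I : finType).
Variables (u : I -> 'cV[K]_N) (h : I -> K).
Variables (V : 'rV[K]_N -> K) (slope : 'rV[K]_N -> 'rV[K]_N -> K) (curv : 'rV[K]_N -> K).
Hypothesis V_line : forall y d t, V (y + t *: d) = V y + t * slope y d - t ^+ 2 * curv d.
Hypothesis curv_ge0 : forall d, 0 <= curv d.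
Hypothesis slope_affine :
  forall d, exists w : 'cV[K]_N, forall y, slope y d = (y *m w) 0 0 + slope 0 d.

Local Notation P := (polyhedron u h).
Local Notation face := (face u h).

Lemma slope_shift y d s : slope (y + s *: d) d = slope y d - 2 * s * curv d.
Proof.
have := V_line (y + s *: d) d 1.
rewrite -addrA -scalerDl !V_line; lra.
Qed.

Lemma polyhedron_rank0_max_attained x0 S : max_attained V (P x0 0 S).
Proof.
have eq_x0 y : P x0 0 S y -> y = x0 by move=> [+ _]; rewrite submx0 subr_eq0 => /eqP.
by move=> [y0 Py0]; exists y0 => // y /eq_x0 ->; rewrite (eq_x0 _ Py0).
Qed.

Definition max_attained_upto k := forall (S : {set I}) (B : 'M[K]_N) x0,
  (#|S| + \rank B <= k)%N -> bounded (P x0 B S) -> max_attained V (P x0 B S).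

Section InductionStep.
Variable k : nat.
Hypothesis IHk : max_attained_upto k.
Variables (S : {set I}) (B : 'M[K]_N) (x0 : 'rV[K]_N).
Hypotheses (size_S_B : (#|S| + \rank B <= k.+1)%N) (P_bounded : bounded (P x0 B S)).

Lemma bounded_sub (Q : 'rV[K]_N -> Prop) : (forall x, Q x -> P x0 B S x) -> bounded Q.
Proof. by case: P_bounded => M PM QP; exists M => x /QP /PM. Qed.

Lemma face_max_attained i : max_attained V (face x0 B S i).
Proof.
move=> [x1 face_x1]; have [iS Px1 x1i] := face_x1.
have cut := polyhedron_cut (S' := S :\ i) Px1 x1i.
have {}cut x : face x0 B S i x <-> P x1 (B :&: kermx (u i))%MS (S :\ i) x.
  rewrite -cut; last 2 first.
  - by move=> j /setD1P [].
  - by move=> j jS; rewrite in_setD1 jS andbT negbK => /eqP -> y ->.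
  by split=> [[]|[]]; split.
have size_lt : (#|S :\ i| + \rank (B :&: kermx (u i))%MS <= k)%N.
  have := cardsD1 i S; rewrite iS => cardS.
  have := mxrankS (capmxSl B (kermx (u i))); move: size_S_B; rewrite cardS; lia.
have QP x : P x1 (B :&: kermx (u i))%MS (S :\ i) x -> P x0 B S x by move/cut=> [].
have maxQ := IHk size_lt (bounded_sub QP).
by apply: (max_attained_eq (fun x => iff_sym (cut x)) maxQ); exists x1.
Qed.

Lemma max_attained_by_faces (Q : 'rV[K]_N -> Prop) :
  max_attained V Q -> (forall x, Q x -> P x0 B S x) ->
  (forall y, P x0 B S y -> (exists i z, face x0 B S i z /\ V y <= V z) \/
                           exists2 z, Q z & V y <= V z) ->
  max_attained V (P x0 B S).
Proof.
move=> maxQ QP dom.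
apply: (@max_attained_dominated _ _ V (option I)
  (fun j x => if j is Some i then face x0 B S i x else Q x)).
- by move=> [i|] x => [[]|/QP].
- by move=> [i|]; [apply: face_max_attained|].
by move=> y /dom [[i [z []]]|[z]]; [exists (Some i), z|exists None, z].
Qed.

Lemma flat_max_attained d :
  (d <= B)%MS -> d != 0 -> curv d = 0 -> max_attained V (P x0 B S).
Proof.
move=> dB d_neq0 curv0.
apply: (@max_attained_by_faces (fun _ => False)) => // [[]//|y Py]; left.
pose e := if 0 <= slope y d then d else - d.
have eB : (e <= B)%MS by rewrite /e; case: ifP; rewrite ?eqmx_opp.
have e_neq0 : e != 0 by rewrite /e; case: ifP; rewrite ?oppr_eq0.
have V_ray t : 0 <= t -> V y <= V (y + t *: e).
  move=> t_ge0; rewrite /e; case: ifP => slope_sign.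
    by rewrite V_line curv0 mulr0 subr0 lerDl mulr_ge0.
  rewrite scalerN -scaleNr V_line curv0 mulr0 subr0 lerDl.
  by move: slope_sign => /negbT; rewrite -ltNge => ?; nra.
have [T T_ge0 out] := bounded_ray_exits y P_bounded e_neq0.
have [i [t [/andP [t_ge0 _] face_i]]] := polyhedron_exit Py eB T_ge0 out.
by exists i, (y + t *: e); split => //; apply: V_ray.
Qed.

(* Points where [V] is critical along [d] form a polyhedron in a subspace
   excluding [d], hence of smaller rank. *)
Lemma critical_max_attained d (w : 'cV[K]_N) :
  (d <= B)%MS -> 0 < curv d -> (forall y, slope y d = (y *m w) 0 0 + slope 0 d) ->
  max_attained V (fun x => P x0 B S x /\ (x *m w) 0 0 = - slope 0 d).
Proof.
move=> dB curv_gt0 slope_w [x1 [Px1 x1w]].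
have cut := polyhedron_cut (S' := S) Px1 x1w (fun j jS => jS).
have {}cut x : P x0 B S x /\ (x *m w) 0 0 = - slope 0 d <->
               P x1 (B :&: kermx w)%MS S x by apply: cut => j ->.
have size_lt : (#|S| + \rank (B :&: kermx w)%MS <= k)%N.
  have dw : (d *m w) 0 0 = - (2 * curv d).
    by have := slope_shift 0 d 1; rewrite add0r scale1r slope_w; lra.
  suff : (\rank (B :&: kermx w)%MS < \rank B)%N by move: size_S_B; lia.
  rewrite rank_ltmx // ltmxE capmxSl /=; apply/negP => Bkerw.
  have := submx_trans dB (submx_trans Bkerw (capmxSr B (kermx w))).
  move/sub_kermxP/matrixP/(_ 0 0).
  by rewrite dw mxE; lra.
have QP x : P x1 (B :&: kermx w)%MS S x -> P x0 B S x by move/cut=> [].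
have maxQ := IHk size_lt (bounded_sub QP).
by apply: (max_attained_eq (fun x => iff_sym (cut x)) maxQ); exists x1; split.
Qed.

(* Along [d], [V] increases up to the critical point at parameter
   [slope y d / (2 curv d)]. *)
Lemma curved_max_attained d :
  (d <= B)%MS -> 0 < curv d -> max_attained V (P x0 B S).
Proof.
move=> dB curv_gt0; have [w slope_w] := slope_affine d.
apply: (max_attained_by_faces (critical_max_attained dB curv_gt0 slope_w)).
  by move=> x [].
move=> y Py.
pose e := (slope y d / (2 * curv d)) *: d.
have eB : (e <= B)%MS by apply: scalemx_sub.
have V_segment t : 0 <= t <= 1 -> V y <= V (y + t *: e).
  case/andP=> t_ge0 t_le1; rewrite /e scalerA V_line.
  set tau := slope y d / (2 * curv d).
  have -> : slope y d = 2 * tau * curv d by rewrite /tau; field; lra.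
  have : 0 <= tau ^+ 2 * curv d * (t * (2 - t)).
    by rewrite mulr_ge0 ?(mulr_ge0 (sqr_ge0 tau) (ltW curv_gt0)) //; nra.
  nra.
have [Pe|out] := classic (P x0 B S (y + 1 *: e)).
  right; exists (y + 1 *: e); last by apply: V_segment; rewrite ler01 lexx.
  split=> //; have := slope_w (y + 1 *: e); rewrite scale1r /e slope_shift.
  have -> : slope y d - 2 * (slope y d / (2 * curv d)) * curv d = 0 by field; lra.
  lra.
have [i [t [t01 face_i]]] := polyhedron_exit Py eB ler01 out.
by left; exists i, (y + t *: e); split => //; apply: V_segment.
Qed.

End InductionStep.

Lemma concave_quadratic_max_attained k : max_attained_upto k.
Proof.
elim: k => [|k IHk] S B x0 size_S_B P_bounded.
  have /eqP -> : B == 0 by rewrite -mxrank_eq0 -leqn0 (leq_trans _ size_S_B) ?leq_addl.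
  exact: polyhedron_rank0_max_attained.
have [/eqP|B_neq0] := eqVneq (\rank B) 0%N.
  by rewrite mxrank_eq0 => /eqP ->; apply: polyhedron_rank0_max_attained.
have [d0 d0B d0_neq0] : exists2 d : 'rV[K]_N, (d <= B)%MS & d != 0.
  case: (pickP (fun i => row i B != 0)) => [i Bi|noRow].
    by exists (row i B); rewrite ?row_sub.
  move: B_neq0; rewrite mxrank_eq0 => /eqP; case; apply/row_matrixP => i.
  by rewrite row0; apply/eqP/negbFE/noRow.
have [[d [dB [d_neq0 curv0]]]|curved] :=
  classic (exists d : 'rV[K]_N, [/\ (d <= B)%MS, d != 0 & curv d = 0]).
  exact: (flat_max_attained IHk size_S_B P_bounded dB d_neq0 curv0).
apply: (curved_max_attained IHk size_S_B P_bounded d0B).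
rewrite lt_def curv_ge0 andbT; apply: contra_notN curved => /eqP curv0.
by exists d0.
Qed.

End ConcaveQuadratic.

Definition sep_quadratic (K : realFieldType) (n : nat) (al be ga : 'I_n -> K) (x : 'rV[K]_n) :=
  \sum_k (al k * x 0 k - be k * x 0 k ^+ 2 / 2 + ga k).

Lemma mulmx_col11 (K : realFieldType) (n : nat) (x : 'rV[K]_n) (F : 'I_n -> K) :
  (x *m \col_j F j) 0 0 = \sum_j x 0 j * F j.
Proof. by rewrite mxE; apply: eq_bigr => j _; rewrite mxE. Qed.

Lemma sep_quadratic_max_attained (K : realFieldType) (n : nat) (I : finType)
    (u : I -> 'cV[K]_n) (h : I -> K) (al be ga : 'I_n -> K) :
  (forall k, 0 <= be k) -> bounded (polyhedron u h 0 1%:M setT) ->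
  max_attained (sep_quadratic al be ga) (polyhedron u h 0 1%:M setT).
Proof.
move=> be_ge0.
pose slope (y d : 'rV[K]_n) := \sum_k (al k * d 0 k - be k * y 0 k * d 0 k).
pose curv (d : 'rV[K]_n) := \sum_k be k * d 0 k ^+ 2 / 2.
apply: (@concave_quadratic_max_attained _ _ _ u h _ slope curv _ _ _ (#|I| + n)%N).
- move=> y d t; rewrite /sep_quadratic /slope /curv !mulr_sumr -big_split -sumrB /=.
  by apply: eq_bigr => k _; rewrite !mxE; field.
- move=> d; apply: sumr_ge0 => k _.
  by rewrite mulr_ge0 ?(mulr_ge0 (be_ge0 k) (sqr_ge0 _)) ?invr_ge0 ?ler0n.
- move=> d; exists (\col_k (- be k * d 0 k)) => y.
  by rewrite mulmx_col11 /slope -big_split /=; apply: eq_bigr => k _; rewrite !mxE; ring.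
- by rewrite cardsT mxrank1.
Qed.

Section Rebalancing.
Variables (K : realFieldType) (n l : nat) (H : 'M[K]_(l, n)) (f : 'cV[K]_l).

(* Rebalancings are row vectors here, the ambient space of [polyhedron]. *)
Definition rebalancing (th : 'I_n -> K) (x : 'rV[K]_n) :=
  [/\ forall k, th k <= x 0 k, \sum_k x 0 k = 0 &
      forall e, `|\sum_j H e j * x 0 j| <= f e 0].

Definition cell (ka : 'I_n -> K) (s : {ffun 'I_n -> bool}) (x : 'rV[K]_n) :=
  forall k, if s k then ka k <= x 0 k else x 0 k <= ka k.

Definition sgn (b : bool) : K := if b then 1 else -1.

Local Notation constraint := ((('I_n + bool) + ('I_l * bool)) + 'I_n)%type.

(* A cell of the rebalancing set as a polyhedron [x u_i <= h_i]: lower bounds,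
   the two halves of [sum x = 0], the two halves of each line limit, and the
   cell inequalities. *)
Definition cell_normal (s : {ffun 'I_n -> bool}) (i : constraint) : 'cV[K]_n :=
  match i with
  | inl (inl (inl k)) => \col_j - (j == k)%:R
  | inl (inl (inr b)) => \col_j sgn b
  | inl (inr (e, b)) => \col_j (sgn b * H e j)
  | inr k => \col_j (- sgn (s k) * (j == k)%:R)
  end.

Definition cell_bound (th ka : 'I_n -> K) (s : {ffun 'I_n -> bool}) (i : constraint) : K :=
  match i with
  | inl (inl (inl k)) => - th k
  | inl (inl (inr b)) => 0
  | inl (inr (e, b)) => f e 0
  | inr k => - sgn (s k) * ka k
  end.

Lemma sum_delta (x : 'rV[K]_n) (k : 'I_n) : \sum_j x 0 j * (j == k)%:R = x 0 k.
Proof. by rewrite (bigD1 k) //= eqxx mulr1 big1 ?addr0 // => j /negbTE ->; rewrite mulr0. Qed.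

Lemma mulmx_cell_normal s (x : 'rV[K]_n) i :
  (x *m cell_normal s i) 0 0 =
  match i with
  | inl (inl (inl k)) => - x 0 k
  | inl (inl (inr b)) => sgn b * \sum_k x 0 k
  | inl (inr (e, b)) => sgn b * \sum_j H e j * x 0 j
  | inr k => - sgn (s k) * x 0 k
  end.
Proof.
case: i => [[[k|b]|[e b]]|k]; rewrite /= mulmx_col11.
- by rewrite -(sum_delta x k) -sumrN; apply: eq_bigr => j _; rewrite mulrN.
- by rewrite mulr_sumr; apply: eq_bigr => j _; rewrite mulrC.
- by rewrite mulr_sumr; apply: eq_bigr => j _; ring.
- by rewrite -(sum_delta x k) mulr_sumr; apply: eq_bigr => j _; ring.
Qed.

Lemma polyhedron_cellE th ka s x :
  polyhedron (cell_normal s) (cell_bound th ka s) 0 1%:M setT x <->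
  rebalancing th x /\ cell ka s x.
Proof.
split=> [[_ Px]|[[x_ge sum0 flow] xs]].
  have C i := Px i (in_setT i).
  split; first split.
  - by move=> k; have := C (inl (inl (inl k))); rewrite mulmx_cell_normal /= /sgn; lra.
  - have := C (inl (inl (inr true))); have := C (inl (inl (inr false))).
    by rewrite !mulmx_cell_normal /= /sgn; lra.
  - move=> e; have := C (inl (inr (e, true))); have := C (inl (inr (e, false))).
    by rewrite !mulmx_cell_normal /= /sgn ler_norml; lra.
  - by move=> k; have := C (inr k); rewrite mulmx_cell_normal /= /sgn; case: (s k); lra.
split=> [|[[[k|b]|[e b]]|k] _]; rewrite ?submx1 // mulmx_cell_normal /=.
- by have := x_ge k; lra.
- by rewrite sum0 mulr0.
- by have := flow e; rewrite ler_norml /sgn => /andP []; case: b; lra.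
- by have := xs k; rewrite /sgn; case: (s k); lra.
Qed.

Lemma rebalancing_bounded th x : (forall k, th k <= 0) -> rebalancing th x ->
  forall j, `|x 0 j| <= - \sum_k th k.
Proof.
move=> th_le0 [x_ge sum0 _] j.
have sum_excess : \sum_k (x 0 k - th k) = - \sum_k th k by rewrite sumrB sum0 sub0r.
have excess_le : x 0 j - th j <= \sum_k (x 0 k - th k).
  by rewrite (bigD1 j) //= lerDl sumr_ge0 // => k _; rewrite subr_ge0.
have sum_th_le : \sum_k th k <= th j.
  by rewrite (bigD1 j) //= gerDl sumr_le0.
by have := x_ge j; have := th_le0 j; rewrite ler_norml; lra.
Qed.

Lemma piecewise_quadratic_max (th ka : 'I_n -> K) (al be ga : bool -> 'I_n -> K)
    (V : 'rV[K]_n -> K) :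
  (forall k, th k <= 0) -> (forall e, 0 <= f e 0) -> (forall b k, 0 <= be b k) ->
  (forall s x, cell ka s x ->
     V x = sep_quadratic (fun k => al (s k) k) (fun k => be (s k) k) (fun k => ga (s k) k) x) ->
  exists2 xs, rebalancing th xs & forall y, rebalancing th y -> V y <= V xs.
Proof.
move=> th_le0 f_ge0 be_ge0 V_cell.
have reb0 : rebalancing th 0.
  split=> [k||e]; rewrite ?mxE //; first by apply: big1 => k _; rewrite mxE.
  by rewrite big1 ?normr0 // => j _; rewrite mxE mulr0.
apply: (@max_attained_dominated _ _ V {ffun 'I_n -> bool}
          (fun s x => rebalancing th x /\ cell ka s x)); last by exists 0.
- by move=> s x [].
- move=> s; apply: (@max_attained_congr _ _ _
    (sep_quadratic (fun k => al (s k) k) (fun k => be (s k) k) (fun k => ga (s k) k))).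
    by move=> x [_ /V_cell].
  apply: (max_attained_eq (fun x => polyhedron_cellE th ka s x)).
  apply: sep_quadratic_max_attained => [k|]; first exact: be_ge0.
  exists (- \sum_k th k) => x /polyhedron_cellE [reb _].
  exact: rebalancing_bounded.
- move=> y reb_y; exists [ffun k => ka k <= y 0 k], y; split=> //; split=> // k.
  by rewrite ffunE; case: lerP => // /ltW.
Qed.

End Rebalancing.

Section BestResponse.
Variables (K : realFieldType) (a b c : K).

Definition best_response (r : K) := Num.max 0 ((a - b * r) / (2 * (b + c))).

(* For [q = best_response r], the net demand [q + r] is nonnegative exactly
   when [r >= rebalance_floor]. *)
Definition rebalance_floor := - (a / (b + 2 * c)).

Lemma best_response_ge0 r : 0 <= best_response r.
Proof. by rewrite le_max lexx. Qed.

Lemma rebalance_floor_le0 : 0 < a -> 0 <= b -> 0 < c -> rebalance_floor <= 0.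
Proof. by move=> a_gt0 b_ge0 c_gt0; rewrite oppr_le0 divr_ge0 //; lra. Qed.

Lemma best_response_interior r : 0 <= b -> 0 < c ->
  b * r <= a -> best_response r = (a - b * r) / (2 * (b + c)).
Proof. by move=> b_ge0 c_gt0 bra; apply/max_idPr; rewrite divr_ge0 //; lra. Qed.

Lemma best_response_corner r : 0 <= b -> 0 < c -> a <= b * r -> best_response r = 0.
Proof. by move=> b_ge0 c_gt0 abr; apply/max_idPl; rewrite pmulr_lle0 ?invr_gt0; lra. Qed.

Lemma best_response_max r x : 0 <= b -> 0 < c -> 0 <= x ->
  x * (a - b * (x + r)) - c * x ^+ 2 <=
  best_response r * (a - b * (best_response r + r)) - c * best_response r ^+ 2.
Proof.
move=> b_ge0 c_gt0 x_ge0; have [bra|/ltW abr] := lerP (b * r) a; last first.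
  by rewrite best_response_corner //; nra.
rewrite best_response_interior //; set q := _ / _.
have qE : q * (2 * (b + c)) = a - b * r by rewrite /q divfK // gt_eqF //; lra.
have : 0 <= (b + c) * (x - q) ^+ 2 by rewrite mulr_ge0 ?sqr_ge0 //; lra.
nra.
Qed.

Lemma rebalance_floorP r : 0 <= b -> 0 < c ->
  rebalance_floor <= r -> - a <= r * (b + 2 * c).
Proof. by move=> b_ge0 c_gt0; rewrite /rebalance_floor lerNl ler_pdivlMr; lra. Qed.

Lemma floor_le_opp_best_response r : 0 < a -> 0 <= b -> 0 < c ->
  rebalance_floor <= r -> rebalance_floor <= - best_response r.
Proof.
move=> a_gt0 b_ge0 c_gt0 /rebalance_floorP ra; rewrite /rebalance_floor lerN2.
have [bra|/ltW abr] := lerP (b * r) a.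
  rewrite best_response_interior // ler_pdivrMr; last lra.
  by rewrite mulrAC ler_pdivlMr; nra.
by rewrite best_response_corner // divr_ge0; lra.
Qed.

Lemma best_response_net_ge0 r : 0 < a -> 0 <= b -> 0 < c ->
  rebalance_floor <= r -> 0 <= best_response r + r.
Proof.
move=> a_gt0 b_ge0 c_gt0 floor_r; have [r_ge0|r_lt0] := lerP 0 r.
  by rewrite addr_ge0 ?best_response_ge0.
have ra := rebalance_floorP b_ge0 c_gt0 floor_r.
rewrite best_response_interior //; last nra.
rewrite -(@ler_pM2r _ (2 * (b + c))) ?mul0r ?mulrDl ?divfK ?gt_eqF; lra.
Qed.

End BestResponse.

(* A potential for the social-welfare game: on the branch [s <= a / b] its
   derivative is the price [p(q + s)] at the best response [q], and beyond the
   kink (where the best response vanishes) it is the surplus itself. *)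
Section SocialPotential.
Variables (K : realFieldType) (a b c : K).

Definition surplus (d : K) := a * d - b * d ^+ 2 / 2.

Definition kink := a / b.
Definition low_slope := a * (b + 2 * c) / (2 * (b + c)).
Definition low_curv := b * (b + 2 * c) / (2 * (b + c)).
Definition low_potential (s : K) := low_slope * s - low_curv * s ^+ 2 / 2.

Definition soc_potential (s : K) :=
  if s <= kink then low_potential s else surplus s - surplus kink + low_potential kink.

Lemma low_curv_ge0 : 0 <= b -> 0 < c -> 0 <= low_curv.
Proof. by move=> b_ge0 c_gt0; rewrite !mulr_ge0 ?invr_ge0; lra. Qed.

Lemma soc_potential_cell (side : bool) s :
  (if side then kink <= s else s <= kink) ->
  soc_potential s = (if side then a else low_slope) * s
                    - (if side then b else low_curv) * s ^+ 2 / 2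
                    + (if side then low_potential kink - surplus kink else 0).
Proof.
rewrite /soc_potential; case: side => [ks|->]; last by rewrite addr0.
case: ifP => [sk|_]; last by rewrite /surplus; ring.
by rewrite (@le_anti _ _ s kink) ?sk ?ks // /surplus; ring.
Qed.

Lemma low_potential_gap r s : 0 <= b -> 0 < c ->
  surplus ((a - b * r) / (2 * (b + c)) + s) - low_potential s -
  (surplus ((a - b * r) / (2 * (b + c)) + r) - low_potential r) =
  - (b ^+ 2 / (2 * (b + c))) * (s - r) ^+ 2 / 2.
Proof.
move=> b_ge0 c_gt0; rewrite /surplus /low_potential /low_slope /low_curv.
by field; lra.
Qed.

Lemma surplus_shift_gap q s t :
  surplus (q + s) - surplus s - (surplus (q + t) - surplus t) = - (b * q) * (s - t).
Proof. by rewrite /surplus; field. Qed.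

Lemma soc_potential_gap r s : 0 <= b -> 0 < c ->
  surplus (best_response a b c r + s) - soc_potential s <=
  surplus (best_response a b c r + r) - soc_potential r.
Proof.
move=> b_ge0 c_gt0; have [b0|b_gt0] := eqVneq b 0.
  have pot_lin t : soc_potential t = a * t.
    rewrite /soc_potential /low_potential /surplus /low_slope /low_curv /kink b0.
    by rewrite invr0 mulr0; case: ifP => _; field; lra.
  by rewrite !pot_lin /surplus b0; lra.
have {b_gt0}b_gt0 : 0 < b by rewrite lt_def b_gt0.
have bk : b * kink = a by rewrite /kink mulrC divfK ?gt_eqF.
have gap_ge0 t : 0 <= b ^+ 2 / (2 * (b + c)) * (t ^+ 2) / 2.
  rewrite mulr_ge0 ?invr_ge0 ?ler0n // mulr_ge0 ?sqr_ge0 // divr_ge0 ?sqr_ge0 //; lra.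
rewrite /soc_potential; have [rk|kr] := lerP r kink.
  have bra : b * r <= a by rewrite -bk ler_pM2l.
  have q_ge0 := best_response_ge0 a b c r.
  rewrite best_response_interior // in q_ge0 *.
  have low := low_potential_gap r _ b_ge0 c_gt0.
  case: ifP => [_|/negbT]; first by have := low s; have := gap_ge0 (s - r); lra.
  rewrite -ltNge => /ltW ks; have := surplus_shift_gap ((a - b * r) / (2 * (b + c))) s kink.
  have := low kink; have := gap_ge0 (kink - r); have := mulr_ge0 (ltW b_gt0) q_ge0.
  nra.
have abr : a <= b * r by rewrite -bk ler_pM2l // ltW.
rewrite best_response_corner // !add0r.
case: ifP => [sk|_]; last by lra.
have := low_potential_gap kink s b_ge0 c_gt0; have := gap_ge0 (s - kink).
by rewrite bk subrr mul0r !add0r; lra.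
Qed.

End SocialPotential.

Section Existence.
Variables (R : rcfType) (n l : nat) (H : 'M[R]_(l, n)) (f : 'cV[R]_l) (a b c : 'I_n -> R).
Hypotheses (f_ge0 : forall e, 0 <= f e 0) (a_gt0 : forall k, 0 < a k).
Hypotheses (b_ge0 : forall k, 0 <= b k) (c_gt0 : forall k, 0 < c k).

Definition floors k := rebalance_floor (a k) (b k) (c k).

Definition responses (x : 'rV[R]_n) : 'cV[R]_n :=
  \col_k best_response (a k) (b k) (c k) (x 0 k).

Lemma floors_le0 k : floors k <= 0.
Proof. exact: rebalance_floor_le0. Qed.

Lemma responses_feasible xs : rebalancing H f floors xs -> SM H f (responses xs) xs^T.
Proof.
move=> [floor_xs sum0 flow]; split=> [k|e|].
- by rewrite !mxE best_response_net_ge0 ?floor_xs.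
- by rewrite mxE; under eq_bigr do rewrite mxE; apply: flow.
- by under eq_bigr do rewrite mxE.
Qed.

Lemma rebalancing_of_feasible xs r :
  rebalancing H f floors xs -> SM H f (responses xs) r -> rebalancing H f floors r^T.
Proof.
move=> [floor_xs _ _] [net_ge0 flow sum0]; split=> [k||e].
- have := net_ge0 k; rewrite !mxE => net_k.
  have := floor_le_opp_best_response (a_gt0 k) (b_ge0 k) (c_gt0 k) (floor_xs k).
  rewrite /floors; lra.
- by under eq_bigr do rewrite mxE.
- by under eq_bigr do rewrite mxE; have := flow e; rewrite mxE.
Qed.

Lemma gne_of_rebalancing_max (piM : 'cV[R]_n -> 'cV[R]_n -> R) xs :
  rebalancing H f floors xs ->
  (forall r, rebalancing H f floors r^T -> piM (responses xs) r <= piM (responses xs) xs^T) ->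
  GNE H f a b c piM (responses xs) xs^T.
Proof.
move=> reb_xs xs_max; split=> [k|||r /(rebalancing_of_feasible reb_xs)/xs_max //].
- by rewrite mxE best_response_ge0.
- exact: responses_feasible.
- move=> k x x_ge0; rewrite /profitG /price /upd !mxE eqxx.
  exact: best_response_max.
Qed.

Lemma W_resE q r :
  W_res a b c q r = sep_quadratic a b (fun _ => 0) r^T + \sum_k b k * q k 0 ^+ 2 / 2.
Proof.
rewrite /W_res /sep_quadratic -big_split /=; apply: eq_bigr => k _.
by rewrite /int_price /price mxE; field.
Qed.

Lemma W_res_gne_exists : exists q r, GNE H f a b c (W_res a b c) q r.
Proof.
have [xs reb_xs xs_max] := @piecewise_quadratic_max _ _ _ H f floors (fun _ => 0)
  (fun _ => a) (fun _ => b) (fun _ _ => 0) (sep_quadratic a b (fun _ => 0))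
  floors_le0 f_ge0 (fun _ => b_ge0) (fun _ _ _ => erefl).
exists (responses xs), xs^T; apply: gne_of_rebalancing_max => // r reb_r.
by rewrite !W_resE trmxK lerD2r xs_max.
Qed.

Definition soc_potentials (x : 'rV[R]_n) :=
  \sum_k soc_potential (a k) (b k) (c k) (x 0 k).

Lemma W_socE q r :
  W_soc a b c q r = \sum_k (surplus (a k) (b k) (q k 0 + r k 0)
                            - soc_potential (a k) (b k) (c k) (r k 0))
                    + soc_potentials r^T - \sum_k c k * q k 0 ^+ 2.
Proof.
rewrite /W_soc /soc_potentials -big_split -sumrB /=; apply: eq_bigr => k _.
by rewrite /int_price /surplus mxE; ring.
Qed.

Lemma W_soc_gne_exists : exists q r, GNE H f a b c (W_soc a b c) q r.
Proof.
pose pick (x y : 'I_n -> R) (side : bool) k := if side then x k else y k.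
pose al := pick a (fun k => low_slope (a k) (b k) (c k)).
pose be := pick b (fun k => low_curv (b k) (c k)).
pose ga := pick (fun k => low_potential (a k) (b k) (c k) (kink (a k) (b k))
                          - surplus (a k) (b k) (kink (a k) (b k))) (fun _ => 0).
have be_ge0 side k : 0 <= be side k by case: side; rewrite /be /pick ?low_curv_ge0.
have pot_cell s x : cell (fun k => kink (a k) (b k)) s x ->
    soc_potentials x = sep_quadratic (fun k => al (s k) k) (fun k => be (s k) k)
                                     (fun k => ga (s k) k) x.
  move=> x_cell; apply: eq_bigr => k _; rewrite /al /be /ga /pick.
  by rewrite (soc_potential_cell (c k) (x_cell k)); case: (s k).
have [xs reb_xs xs_max] :=
  piecewise_quadratic_max H floors_le0 f_ge0 be_ge0 pot_cell.
exists (responses xs), xs^T; apply: gne_of_rebalancing_max => // r reb_r.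
rewrite !W_socE trmxK lerD2r lerD ?xs_max //.
by apply: ler_sum => k _; rewrite !mxE soc_potential_gap.
Qed.

End Existence.

Lemma sum_ord2 (V : zmodType) (F : 'I_2 -> V) : \sum_(k < 2) F k = F 0 + F 1.
Proof. by rewrite !big_ord_recl big_ord0 addr0; congr (F _ + F _); apply: val_inj. Qed.

Lemma ord2P (k : 'I_2) : (k == 0) || (k == 1).
Proof. by case: k => [[|[|]]]. Qed.

(* On a single line the shift factors are [±1] on one node and [0] at the
   reference node, so the flow is [±r_1] once the injections sum to zero. *)
Lemma two_node_flow (R : rcfType) (H : 'M[R]_(1, 2)) (r : 'cV[R]_2) :
  is_shift_factor H -> \sum_k r k 0 = 0 -> `|(H *m r) 0 0| = `|r 0 0|.
Proof.
move=> [fr [to [beta [s [fr_to _ _ cols]]]]] sum0.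
have H0 k : H 0 k = (fr 0 == k)%:R - (fr 0 == s)%:R.
  have [th [_ Lth colk]] := cols k.
  have /matrixP/(_ (fr 0) 0) := Lth; rewrite /laplacian -mulmxA mxE big_ord1 !mxE eqxx.
  rewrite (negbTE (fr_to 0)) subr0 mul1r => <-.
  by have /matrixP/(_ 0 0) := colk; rewrite !mxE.
have -> : (H *m r) 0 0 = r (fr 0) 0.
  rewrite mxE (eq_bigr (fun k => (fr 0 == k)%:R * r k 0 - (fr 0 == s)%:R * r k 0)).
    rewrite sumrB -mulr_sumr sum0 mulr0 subr0 (bigD1 (fr 0)) //= eqxx mul1r.
    by rewrite big1 ?addr0 // => k /negbTE; rewrite eq_sym => ->; rewrite mul0r.
  by move=> k _; rewrite H0 mulrBl.
move: sum0; rewrite sum_ord2; have /orP [] := ord2P (fr 0) => /eqP -> // r10.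
by rewrite (_ : r 1 0 = - r 0 0) ?normrN //; lra.
Qed.

Lemma two_node_shift_factor_exists (R : rcfType) : exists H : 'M[R]_(1, 2), is_shift_factor H.
Proof.
pose fr (e : 'I_1) : 'I_2 := 0; pose to (e : 'I_1) : 'I_2 := 1.
exists (\matrix_(e < 1, k < 2) (if k == 0 then 0 else -1)), fr, to, (fun _ => 1), 0.
split=> // [i j|k].
- have adj01 : adj fr to 0 1 by apply/existsP; exists 0; rewrite !eqxx.
  have adj10 : adj fr to 1 0 by apply/existsP; exists 0; rewrite !eqxx orbT.
  have /orP [] := ord2P i => /eqP ->; have /orP [] := ord2P j => /eqP ->;
    by rewrite ?connect0 ?connect1.
- have /orP [] := ord2P k => /eqP ->.
    exists 0; split; rewrite ?mxE ?mulmx0 //; apply/matrixP => i j; rewrite !mxE //.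
    by rewrite subrr.
  exists (\col_i (if i == 0 then 0 else 1)); split; rewrite ?mxE //.
    apply/matrixP => i j; rewrite /laplacian /branch_mx /incidence /unit_inj.
    rewrite !mxE !big_ord_recl !big_ord0 !mxE !big_ord_recl !big_ord0 !mxE.
    by have /orP [] := ord2P i => /eqP -> /=; lra.
  apply/matrixP => i j; rewrite !ord1 /branch_mx /incidence.
  by rewrite !mxE !big_ord_recl !big_ord0 !mxE /=; lra.
Qed.

Lemma profit_argmax (K : realFieldType) (a b c r q : K) :
  0 <= b -> 0 < c -> b * r <= a ->
  (forall x, 0 <= x ->
     x * (a - b * (x + r)) - c * x ^+ 2 <= q * (a - b * (q + r)) - c * q ^+ 2) ->
  q = (a - b * r) / (2 * (b + c)).
Proof.
move=> b_ge0 c_gt0 bra q_max; set x := _ / _.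
have x_ge0 : 0 <= x by rewrite divr_ge0; lra.
have xE : x * (2 * (b + c)) = a - b * r by rewrite /x divfK // gt_eqF //; lra.
have bc_gt0 : 0 < b + c by lra.
have := q_max x x_ge0 => profit_le.
apply/eqP; rewrite -subr_eq0 -sqrf_eq0 eq_le sqr_ge0 andbT -(pmulr_rle0 _ bc_gt0).
nra.
Qed.

Lemma W_con_sum (R : rcfType) (n : nat) (a b c : 'I_n -> R) (q r : 'cV[R]_n) :
  W_con a b c q r = \sum_k b k * (q k 0 + r k 0) ^+ 2 / 2.
Proof. by apply: eq_bigr => k _; rewrite /int_price /price; field. Qed.

Section TwoNodeExample.
Variable R : rcfType.
Let f : 'cV[R]_1 := \col_(e < 1) 2%:R.
Let a : 'I_2 -> R := fun _ => 10%:R.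
Let b : 'I_2 -> R := fun k => if k == ord0 then 6%:R / 5%:R else 1.
Let c : 'I_2 -> R := fun _ => 1.

Definition antisym2 (t : R) : 'cV[R]_2 := \col_i (if i == 0 then t else - t).

Lemma antisym2_feasible (H : 'M[R]_(1, 2)) (q : 'cV[R]_2) t : is_shift_factor H ->
  0 <= q 0 0 + t -> 0 <= q 1 0 - t -> `|t| <= 2 -> SM H f q (antisym2 t).
Proof.
move=> HS net0 net1 t_le; have sum0 : \sum_k antisym2 t k 0 = 0.
  by rewrite sum_ord2 !mxE /= subrr.
split=> // [k|e]; last by rewrite ord1 (two_node_flow HS sum0) /f !mxE.
by rewrite !mxE; have /orP [] := ord2P k => /eqP ->.
Qed.

Lemma W_con_antisym2 (q : 'cV[R]_2) t :
  W_con a b c q (antisym2 t) = 3 / 5 * (q 0 0 + t) ^+ 2 + (q 1 0 - t) ^+ 2 / 2.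
Proof. by rewrite W_con_sum sum_ord2 !mxE /b /=; field. Qed.

(* With [r_1 = rho], the best responses are [q_1 = (50 - 6 rho) / 22] and
   [q_2 = (10 + rho) / 4]; the consumer welfare is convex in the market
   maker's choice, so only the ends of the feasible interval compete. *)
Lemma antisym2_gap (rho : R) : -2 <= rho <= 2 ->
  3 / 5 * ((50 - 6 * rho) / 22 + 2) ^+ 2 + ((10 + rho) / 4 - 2) ^+ 2 / 2 <=
  3 / 5 * ((50 - 6 * rho) / 22 + rho) ^+ 2 + ((10 + rho) / 4 - rho) ^+ 2 / 2 ->
  rho = 2.
Proof.
move=> /andP [rho_ge rho_le] W_le.
have : 0 <= (rho - 2) * (23 / 44 * rho + 267 / 110).
  suff <- : 3 / 5 * ((50 - 6 * rho) / 22 + rho) ^+ 2 + ((10 + rho) / 4 - rho) ^+ 2 / 2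
     - (3 / 5 * ((50 - 6 * rho) / 22 + 2) ^+ 2 + ((10 + rho) / 4 - 2) ^+ 2 / 2)
     = (rho - 2) * (23 / 44 * rho + 267 / 110) :> R by lra.
  by field.
nra.
Qed.

Lemma two_node_no_gne (H : 'M[R]_(1, 2)) : is_shift_factor H ->
  feasible H f /\ ~ exists q r, GNE H f a b c (W_con a b c) q r.
Proof.
move=> HS; split.
  exists 0; split=> [k|]; first by rewrite mxE.
  exists 0; split=> [k|e|].
  - by rewrite !mxE addr0.
  - by rewrite mulmx0 mxE normr0 /f mxE.
  - by apply: big1 => k _; rewrite mxE.
move=> [q [r [q_ge0 [net_ge0 line sum0] q_best r_best]]].
set rho := r 0 0.
have r1 : r 1 0 = - rho by move: sum0; rewrite sum_ord2 /rho; lra.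
have rE : r = antisym2 rho.
  by apply/matrixP => i j; rewrite !ord1 !mxE; have /orP [] := ord2P i => /eqP ->.
have rho_bd : `|rho| <= 2 by have := line 0; rewrite (two_node_flow HS sum0) /f mxE.
move: rho_bd; rewrite ler_norml => rho_bd; have [rho_ge rho_le] := andP rho_bd.
have q0E : q 0 0 = (50 - 6 * rho) / 22.
  rewrite (@profit_argmax _ (a 0) (b 0) (c 0) rho (q 0 0)) /a /b /c /=; try lra.
    by field.
  move=> x x_ge0; have := q_best 0 x x_ge0.
  by rewrite /profitG /price /upd !mxE eqxx.
have q1E : q 1 0 = (10 + rho) / 4.
  rewrite (@profit_argmax _ (a 1) (b 1) (c 1) (- rho) (q 1 0)) /a /b /c /=; try lra.
    by field.
  move=> x x_ge0; have := q_best 1 x x_ge0.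
  by rewrite /profitG /price /upd !mxE eqxx r1.
have W_r : W_con a b c q r = 3 / 5 * (q 0 0 + rho) ^+ 2 + (q 1 0 - rho) ^+ 2 / 2.
  by rewrite rE W_con_antisym2.
have rho2 : rho = 2.
  have feas : SM H f q (antisym2 2).
    by apply: antisym2_feasible HS _ _ _; rewrite ?q0E ?q1E ?ger0_norm; lra.
  have := r_best _ feas; rewrite W_con_antisym2 W_r q0E q1E.
  exact: antisym2_gap.
have feas : SM H f q (antisym2 (- q 0 0)).
  by apply: antisym2_feasible HS _ _ _; rewrite ?normrN ?q0E ?q1E ?rho2 ?ger0_norm; lra.
have := r_best _ feas; rewrite W_con_antisym2 W_r q0E q1E rho2.
lra.
Qed.

End TwoNodeExample.

Theorem theorem1 (R : rcfType) :
  (* (i) social welfare: a GNE exists *)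
  (forall (n l : nat) (H : 'M[R]_(l, n)) (f : 'cV[R]_l) (a b c : 'I_n -> R),
     is_shift_factor H -> (forall e, 0 <= f e 0) ->
     (forall k, 0 < a k) -> (forall k, 0 <= b k) -> (forall k, 0 < c k) ->
     feasible H f ->
     exists q r, GNE H f a b c (W_soc a b c) q r) /\
  (* (ii) residual welfare: a GNE exists *)
  (forall (n l : nat) (H : 'M[R]_(l, n)) (f : 'cV[R]_l) (a b c : 'I_n -> R),
     is_shift_factor H -> (forall e, 0 <= f e 0) ->
     (forall k, 0 < a k) -> (forall k, 0 <= b k) -> (forall k, 0 < c k) ->
     feasible H f ->
     exists q r, GNE H f a b c (W_res a b c) q r) /\
  (* (iii) consumer welfare: on the 2-node network with a = (10,10),
     b = (1.2, 1), c = (1,1), f12 = 2, the (feasible) game has no GNE *)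
  ((exists H : 'M[R]_(1, 2), is_shift_factor H) /\
   forall H : 'M[R]_(1, 2),
     let f : 'cV[R]_1 := \col_(e < 1) 2%:R in
     let a : 'I_2 -> R := fun _ => 10%:R in
     let b : 'I_2 -> R := fun k => if k == ord0 then 6%:R / 5%:R else 1 in
     let c : 'I_2 -> R := fun _ => 1 in
     is_shift_factor H ->
     feasible H f /\ ~ exists q r, GNE H f a b c (W_con a b c) q r).
Proof.
(* The zero rebalancing is always admissible. *)
split; [|split].
- by move=> n l H f a b c _ f_ge0 a_gt0 b_ge0 c_gt0 _; apply: W_soc_gne_exists.
- by move=> n l H f a b c _ f_ge0 a_gt0 b_ge0 c_gt0 _; apply: W_res_gne_exists.
- split; first exact: two_node_shift_factor_exists.
  by move=> H f a b c; apply: two_node_no_gne.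
Qed.
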